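(* Let $A$ be a connected skew diagram with $\mathbf w=(w_1,\dots,w_r)$, let $n_1$ be the number of nonempty rows of $A$, and let $\mathbf w^1=\mathbf w(A\setminus V_1)$. Suppose that for some $3\le\ell\le r$ the partition $\sigma^1:=(n_1)\cup\mathbf w^1$ has the form $\sigma^1=(n_1,\bar w_2,\dots,\bar w_\ell,w_{\ell+1},\dots,w_r)$ with $\bar w_k\le w_k$ for $k=2,\dots,\ell$ and $0<\bar w_\ell<w_\ell$. Suppose moreover there are integers $2\le i<j\le\ell$ with $\bar w_i\ge\bar w_j+2$ and $w_j>\bar w_j$. Then $\mathrm{supp}(A)\subsetneq[\mathbf w,\mathbf n]$.
   Context: For $\mu\subseteq\lambda$, the skew diagram $A=\lambda/\mu$ is the set of boxes of $\lambda$ not in $\mu$ (English notation). $V_1$ is the set of rightmost boxes of the nonempty rows of $A$ (so $A\setminus V_1$ is a skew diagram). For a skew diagram $B$, $\mathbf w(B)$ is the partition of its column lengths sorted decreasingly and $\mathbf n(B)$ the conjugate of the partition of its row lengths sorted decreasingly; $\mathbf w=\mathbf w(A)$, $\mathbf n=\mathbf n(A)$. $\alpha\cup\beta$ denotes the partition consisting of all parts of $\alpha$ and $\beta$ sorted decreasingly. $[\mathbf w,\mathbf n]$ is the dominance interval, and $\mathrm{supp}(A)=\{\nu':c^\lambda_{\mu\nu}>0\}$ where $s_{\lambda/\mu}=\sum_\nu c^\lambda_{\mu\nu}s_\nu$. *)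

From mathcomp Require Import all_boot.
Set Implicit Arguments. Unset Strict Implicit. Unset Printing Implicit Defensive.

Definition is_part (p : seq nat) : bool := sorted geq p && all (fun x => 0 < x) p.

Definition maxl (s : seq nat) : nat := foldr maxn 0 s.

Definition conj (p : seq nat) : seq nat :=
  [seq count (fun x => j < x) p | j <- iota 0 (maxl p)].

Definition skew_shape (la mu : seq nat) : Prop :=
  is_part la /\ is_part mu /\ forall i, nth 0 mu i <= nth 0 la i.

(* box (i,j) (row i, column j, 0-based, English notation) lies in lambda/mu *)
Definition in_skew (la mu : seq nat) (i j : nat) : bool :=
  (nth 0 mu i <= j) && (j < nth 0 la i).

Definition skew_adj (la mu : seq nat)
    (x y : 'I_(size la) * 'I_(maxl la)) : bool :=
  [&& in_skew la mu x.1 x.2, in_skew la mu y.1 y.2 &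
      ((x.1 == y.1 :> nat) && ((x.2.+1 == y.2 :> nat) || (y.2.+1 == x.2 :> nat)))
   || ((x.2 == y.2 :> nat) && ((x.1.+1 == y.1 :> nat) || (y.1.+1 == x.1 :> nat)))].

Definition connected_skew (la mu : seq nat) : Prop :=
  (exists i j, in_skew la mu i j) /\
  forall x y : 'I_(size la) * 'I_(maxl la),
    in_skew la mu x.1 x.2 -> in_skew la mu y.1 y.2 ->
    connect (@skew_adj la mu) x y.

Definition col_len (la mu : seq nat) (j : nat) : nat :=
  count (fun i => in_skew la mu i j) (iota 0 (size la)).
Definition row_len (la mu : seq nat) (i : nat) : nat := nth 0 la i - nth 0 mu i.

Definition wvec (la mu : seq nat) : seq nat :=
  sort geq (filter (fun x => 0 < x) [seq col_len la mu j | j <- iota 0 (maxl la)]).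

Definition nvec (la mu : seq nat) : seq nat :=
  conj (sort geq (filter (fun x => 0 < x) [seq row_len la mu i | i <- iota 0 (size la)])).

Definition nrows (la mu : seq nat) : nat :=
  count (fun i => nth 0 mu i < nth 0 la i) (iota 0 (size la)).

(* A \ V_1 = remV1 la / mu : remove the rightmost box of every nonempty row *)
Definition remV1 (la mu : seq nat) : seq nat :=
  [seq if nth 0 mu i < nth 0 la i then (nth 0 la i).-1 else nth 0 la i
  | i <- iota 0 (size la)].

(* 1-based indexing of sequences *)
Definition nth1 (s : seq nat) (k : nat) : nat := nth 0 s k.-1.

Definition dominated (a b : seq nat) : Prop :=
  forall k, sumn (take k a) <= sumn (take k b).

Definition in_interval (la mu rho : seq nat) : Prop :=
  is_part rho /\ sumn rho = sumn (wvec la mu) /\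
  dominated (wvec la mu) rho /\ dominated rho (nvec la mu).

Definition read_word (la mu : seq nat) (T : nat -> nat -> nat) : seq nat :=
  flatten [seq rev [seq T i j | j <- iota (nth 0 mu i) (row_len la mu i)]
          | i <- iota 0 (size la)].

Definition LR_tableau (la mu nu : seq nat) (T : nat -> nat -> nat) : Prop :=
  (forall i j, in_skew la mu i j -> in_skew la mu i j.+1 -> T i j <= T i j.+1) /\
  (forall i j, in_skew la mu i j -> in_skew la mu i.+1 j -> T i j < T i.+1 j) /\
  all (fun x => (0 < x) && (x <= size nu)) (read_word la mu T) /\
  (forall k, count_mem k.+1 (read_word la mu T) = nth 0 nu k) /\
  (forall n k, count_mem k.+2 (take n (read_word la mu T))
               <= count_mem k.+1 (take n (read_word la mu T))).

(* c^lambda_{mu nu} > 0, by the Littlewood-Richardson rule *)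
Definition LR_pos (la mu nu : seq nat) : Prop := exists T, LR_tableau la mu nu T.

(* supp(A) = { nu' : c^lambda_{mu nu} > 0 } *)
Definition in_supp (la mu rho : seq nat) : Prop :=
  exists nu, is_part nu /\ LR_pos la mu nu /\ rho = conj nu.

(* The partition sigma = (n1) u w(A \ V1) lies in [w, n]: it is dominated by n
   because deleting V1 shortens every nonempty row by one box, and it dominates w
   because its parts after the first are at most those of w while the totals
   agree, strictly at position l.  Moving one box of sigma from a part a <= i to
   a part b <= j (possible as a partition thanks to wb_i >= wb_j + 2) keeps it in
   [w, n], the strict inequality at l absorbing the loss on (a, b].  But in a
   Littlewood-Richardson tableau whose content has n1 parts each label
   1, ..., n1 is the rightmost entry of some row, and the labels in a column
   are distinct, so any nu' in supp(A) with nu'_1 = n1 satisfies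
   nu'_1 + ... + nu'_(a+1) >= n1 + w1_1 + ... + w1_a; the moved partition
   misses this by one. *)

From mathcomp Require Import all_boot zify.
Set Implicit Arguments. Unset Strict Implicit. Unset Printing Implicit Defensive.

Lemma count_sum (T : Type) (P : pred T) s : count P s = \sum_(x <- s) P x.
Proof. by rewrite -sumn_count sumnE big_map. Qed.

Lemma sum_eqb_uniq (L : seq nat) x : uniq L -> x \in L -> \sum_(v <- L) (x == v) = 1.
Proof.
by move=> uL xL; rewrite -count_sum (eq_count (a2 := pred1 x)) ?count_uniq_mem ?xL.
Qed.

Lemma leq_sum_sub_uniq (J s : seq nat) (F : nat -> nat) :
  uniq J -> uniq s -> {subset J <= s} -> \sum_(j <- J) F j <= \sum_(j <- s) F j.
Proof.
move=> uJ us sJ.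
have pe : perm_eq J (filter (mem J) s).
  apply: uniq_perm; rewrite ?filter_uniq // => z.
  by rewrite mem_filter /=; case: (boolP (z \in J)) => // /sJ ->.
by rewrite (perm_big _ pe) big_filter (bigID (mem J) xpredT) leq_addr.
Qed.

Lemma count_injective_leq1 (T : eqType) (P : pred T) s :
  uniq s -> {in s &, forall x y, P x -> P y -> x = y} -> count P s <= 1.
Proof.
elim: s => [|x s IH] //= /andP[xs us] H.
case Px: (P x) => /=; last by apply: IH => // a b ha hb; apply: H; rewrite inE ?ha ?hb orbT.
suff -> : count P s = 0 by [].
apply/eqP; rewrite -leqn0 leqNgt -has_count; apply/hasP => -[y ys Py]; move: xs.
by rewrite (H x y (mem_head _ _) _ Px Py) ?ys // inE ys orbT.
Qed.

Lemma sum_ltn_iota x K : \sum_(j <- iota 0 K) (j < x) = minn x K.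
Proof.
elim: K => [|K IH]; first by rewrite big_nil minn0.
by rewrite -addn1 iotaD big_cat /= big_cons big_nil IH; case: ltnP => /=; lia.
Qed.

Lemma sum_nat_eqb a K : \sum_(0 <= p < K) (p == a) = (a < K).
Proof.
elim: K => [|K IH]; first by rewrite big_geq.
by rewrite big_nat_recr //= IH; case: eqP => [->|]; lia.
Qed.

Lemma sumn_take_nth (s : seq nat) m :
  sumn (take m s) = \sum_(0 <= p < minn m (size s)) nth 0 s p.
Proof.
by rewrite -{1}(mkseq_nth 0 s) /mkseq -map_take take_iota sumnE big_map /index_iota subn0.
Qed.

Lemma leq_sumn_nth (s t : seq nat) :
  (forall p, nth 0 s p <= nth 0 t p) -> sumn s <= sumn t.
Proof.
elim: s t => [|x s IH] [|y t] //= H; last first.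
  by rewrite leq_add ?(H 0) ?(IH t (fun p => H p.+1)).
have Hs p : nth 0 s p <= nth 0 [::] p by have := H p.+1; rewrite !nth_nil.
by have := H 0; have := IH _ Hs; rewrite /=; lia.
Qed.

Lemma ltn_sumn_nth (s t : seq nat) q :
  (forall p, nth 0 s p <= nth 0 t p) -> nth 0 s q < nth 0 t q -> sumn s < sumn t.
Proof.
elim: q s t => [|q IH] [|x s] [|y t] //= H lt; rewrite ?nth_nil // in lt.
- by rewrite ltn_addr.
- by rewrite -addSn leq_add // (leq_sumn_nth (fun p => H p.+1)).
- by apply: ltn_addl; apply: (IH [::]) => [p|]; rewrite nth_nil.
- by rewrite -addnS leq_add ?(H 0) // (IH s t (fun p => H p.+1)).
Qed.

Lemma sumn_take_leq_tail (s t : seq nat) m : sumn s = sumn t ->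
  (forall p, m <= p -> nth 0 s p <= nth 0 t p) -> sumn (take m t) <= sumn (take m s).
Proof.
move=> e le; have : sumn (drop m s) <= sumn (drop m t).
  by apply: leq_sumn_nth => p; rewrite !nth_drop le ?leq_addr.
by rewrite -(cat_take_drop m s) -(cat_take_drop m t) !sumn_cat in e; lia.
Qed.

Lemma sumn_take_ltn_tail (s t : seq nat) m q : sumn s = sumn t ->
  (forall p, m <= p -> nth 0 s p <= nth 0 t p) -> m <= q -> nth 0 s q < nth 0 t q ->
  sumn (take m t) < sumn (take m s).
Proof.
move=> e le mq lt; have : sumn (drop m s) < sumn (drop m t).
  apply: (ltn_sumn_nth (q := q - m)) => [p|]; rewrite !nth_drop ?le ?leq_addr //.
  by rewrite subnKC.
by rewrite -(cat_take_drop m s) -(cat_take_drop m t) !sumn_cat in e; lia.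
Qed.

Lemma sumn_take_perm_map (f : nat -> nat) (t s : seq nat) k :
  uniq s -> perm_eq t (map f s) ->
  exists J, [/\ uniq J, {subset J <= s}, size J <= k &
                sumn (take k t) = \sum_(j <- J) f j].
Proof.
elim: t s k => [|x t IH] s k us pt; first by exists [::]; rewrite big_nil; case: k.
case: k => [|k]; first by exists [::]; rewrite big_nil.
have /mapP[y ys ex] : x \in map f s by rewrite -(perm_mem pt) mem_head.
subst x.
have pt' : perm_eq t (map f (rem y s)).
  by rewrite -(perm_cons (f y)) (perm_trans pt) // -map_cons perm_map // perm_to_rem.
have [J [uJ sJ szJ eJ]] := IH _ k (rem_uniq y us) pt'.
exists (y :: J); split => //=; last by rewrite big_cons eJ.
- by rewrite uJ andbT; apply/negP => /sJ; rewrite mem_rem_uniqF.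
- by move=> z; rewrite inE => /orP[/eqP -> // | /sJ /mem_rem].
Qed.

(** * Partitions and conjugation *)

Lemma geq_transitive : transitive geq.
Proof. exact: rev_trans leq_trans. Qed.

Lemma geq_total : total geq.
Proof. by move=> m n; apply: leq_total. Qed.

Lemma nth_sorted_geq (s : seq nat) p q :
  sorted geq s -> p <= q -> nth 0 s q <= nth 0 s p.
Proof.
move=> ss pq; case: (ltnP q (size s)) => hq; last by rewrite nth_default.
by apply: (sorted_leq_nth geq_transitive (@leqnn) 0 ss) => //; rewrite inE /=; lia.
Qed.

Lemma sort_geq_cons x (s : seq nat) : sorted geq s ->
  nth 0 (sort geq (x :: s)) 0 = x -> sort geq (x :: s) = x :: s.
Proof.
move=> ss; have := sort_sorted geq_total (x :: s).
case: (sort _ _) (permEl (perm_sort geq (x :: s))) => [/perm_size //|y t] pt st /= yx.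
have geq_anti : antisymmetric geq by move=> m n; rewrite andbC; apply: anti_leq.
subst y; congr (x :: _); apply: (sorted_eq geq_transitive geq_anti (path_sorted st) ss).
by rewrite -(perm_cons x).
Qed.

Lemma leq_maxl x p : x \in p -> x <= maxl p.
Proof. by elim: p => [|y p IH] //=; rewrite inE => /orP[/eqP ->|/IH]; lia. Qed.

Lemma maxl_leq p B : (forall x, x \in p -> x <= B) -> maxl p <= B.
Proof.
elim: p => [|y p IH] //= H.
by rewrite geq_max H ?mem_head // IH // => x xp; rewrite H // inE xp orbT.
Qed.

Lemma nth_leq_maxl p i : nth 0 p i <= maxl p.
Proof.
by case: (ltnP i (size p)) => h; [apply/leq_maxl/mem_nth | rewrite nth_default].
Qed.

Lemma sumn_take_conj p k : sumn (take k (conj p)) = \sum_(x <- p) minn x k.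
Proof.
rewrite /conj -map_take take_iota sumnE big_map.
under eq_bigr => j _ do rewrite count_sum.
rewrite exchange_big /=; apply: eq_big_seq => x /leq_maxl xp.
by rewrite sum_ltn_iota; lia.
Qed.

Lemma sumn_conj p : sumn (conj p) = sumn p.
Proof.
rewrite -[conj p](take_oversize (n := maxl p)) ?size_map ?size_iota //.
by rewrite sumn_take_conj sumnE; apply: eq_big_seq => x /leq_maxl; lia.
Qed.

Lemma conj_is_part p : is_part (conj p).
Proof.
apply/andP; split.
- apply/(sortedP 0) => q; rewrite size_map size_iota => hq.
  rewrite !(nth_map 0) ?size_iota ?nth_iota //=; try lia.
  by apply: sub_count => x /=; lia.
- apply/allP => y /mapP[q]; rewrite mem_iota add0n => /andP[_ hq] ->.
  rewrite -has_count; elim: p hq => [|x p IH] //=.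
  by rewrite leq_max => /orP[->|/IH ->]; rewrite ?orbT.
Qed.

Lemma nth0_conj p : all (fun x => 0 < x) p -> nth 0 (conj p) 0 = size p.
Proof.
case: p => [|x p] //= /andP[hx hp].
rewrite (nth_map 0) ?nth_iota ?size_iota ?leq_max ?hx //= hx add1n.
by congr S; apply/eqP; rewrite -all_count.
Qed.

(** * Lattice words *)

Definition lattice_word (s : seq nat) :=
  forall n k, count_mem k.+2 (take n s) <= count_mem k.+1 (take n s).

Lemma lattice_catl s t : lattice_word (s ++ t) -> lattice_word s.
Proof.
move=> H n k; case: (ltnP n (size s)) => h; first by have := H n k; rewrite take_cat h.
by rewrite take_oversize //; have := H (size s) k; rewrite take_size_cat.
Qed.

Lemma lattice_count s k : lattice_word s -> count_mem k.+2 s <= count_mem k.+1 s.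
Proof. by move=> H; have := H (size s) k; rewrite take_size. Qed.

Lemma count_mem_gt0 (s : seq nat) x : (0 < count_mem x s) = (x \in s).
Proof. by rewrite -has_count has_pred1. Qed.

Lemma lattice_mem_down s u v : lattice_word s -> u \in s -> 0 < v <= u -> v \in s.
Proof.
move=> lat us /andP[hv hvu].
suff H d : d < u -> 0 < count_mem (u - d) s.
  have := H (u - v) ltac:(lia); rewrite count_mem_gt0.
  by rewrite (_ : u - (u - v) = v) //; lia.
elim: d => [|d IH] hd; first by rewrite subn0 count_mem_gt0.
have := lattice_count (u - d.+2) lat; have := IH (ltnW hd).
have -> : (u - d.+2).+2 = u - d by lia.
have -> : (u - d.+2).+1 = u - d.+1 by lia.
by move: (count_mem (u - d) s) (count_mem (u - d.+1) s) => x y; lia.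
Qed.

Lemma lattice_pred_mem W h : lattice_word (W ++ [:: h]) -> 1 < h -> h.-1 \in W.
Proof.
move=> lat h1; have := lattice_count (h - 2) lat.
have -> : (h - 2).+2 = h by lia.
have -> : (h - 2).+1 = h.-1 by lia.
rewrite -count_mem_gt0 !count_cat /= eqxx (_ : (h == h.-1) = false); last first.
  by apply/negbTE; lia.
by move: (count_mem h W) (count_mem h.-1 W) => x y; lia.
Qed.

Lemma sorted_geq_split (b : seq nat) v : sorted geq b ->
  b = filter (fun x => v <= x) b ++ filter (fun x => x < v) b.
Proof.
elim: b => [|x b IH] //= sb.
have al := order_path_min geq_transitive sb.
case: (leqP v x) => h /=; first by rewrite -IH // (path_sorted sb).
rewrite (@eq_in_filter _ _ pred0) ?filter_pred0 ?cat0s; last first.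
  by move=> y /(allP al) /=; lia.
by congr cons; symmetry; apply/all_filterP/allP => y /(allP al) /=; lia.
Qed.

Lemma lattice_sorted_block (W b : seq nat) v : sorted geq b ->
  lattice_word (W ++ b) -> count_mem v.+2 W + count_mem v.+2 b <= count_mem v.+1 W.
Proof.
move=> sb; rewrite {1}(sorted_geq_split v.+2 sb) catA => /lattice_catl /(lattice_count v).
rewrite !count_cat !count_filter.
have -> : count (predI (pred1 v.+2) (fun x => v.+2 <= x)) b = count_mem v.+2 b.
  by apply: eq_count => x; rewrite /= andb_idr // => /eqP ->.
have -> : count (predI (pred1 v.+1) (fun x => v.+2 <= x)) b = 0.
  rewrite (eq_count (a2 := pred0)) ?count_pred0 // => x /=.
  by apply/negbTE/andP => -[/eqP ->]; rewrite ltnn.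
by rewrite addn0.
Qed.

Lemma sum_count_mem_range M b : all (fun x => (0 < x) && (x <= M)) b ->
  \sum_(1 <= v < M.+1) count_mem v b = size b.
Proof.
elim: b => [|x b IH] /=; first by rewrite big1.
case/andP=> hx hb; rewrite big_split /= IH // sum_eqb_uniq ?iota_uniq //.
by rewrite mem_index_iota; lia.
Qed.

Lemma sum_min_count_block_leq (W b : seq nat) M k : sorted geq b ->
  lattice_word (W ++ b) ->
  \sum_(1 <= v < M.+1)
     (minn (count_mem v W + count_mem v b) k - minn (count_mem v W) k) <= k.
Proof.
move=> sb lat.
(* The terms telescope: [lattice_sorted_block] bounds the new count of [v.+1],
   capped at [k], by the old count of [v], capped at [k]. *)
pose D m := if m is m'.+1 then minn (count_mem m'.+1 W) k else k.
suff telescope m : \sum_(1 <= v < m.+1)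
    (minn (count_mem v W + count_mem v b) k - minn (count_mem v W) k) + D m <= k.
  exact: leq_trans (leq_addr _ _) (telescope M).
elim: m => [|m IHm]; first by rewrite big_geq.
rewrite big_nat_recr //= -addnA.
suff : minn (count_mem m.+1 W + count_mem m.+1 b) k <= D m.
  move: IHm; move: (\sum_(_ <= _ < _) _) (count_mem m.+1 W) (count_mem m.+1 b).
  by move: (D m) => Dm S0 x y; lia.
case: m {IHm} => [|m] /=; first exact: geq_minr.
have := lattice_sorted_block m sb lat.
by move: (count_mem m.+2 W + _) (count_mem m.+1 W) => x y; lia.
Qed.

Lemma lattice_blocks_bound (bs : seq (seq nat)) k M :
  all (sorted geq) bs -> lattice_word (flatten bs) ->
  all (fun x => (0 < x) && (x <= M)) (flatten bs) ->
  \sum_(1 <= v < M.+1) minn (count_mem v (flatten bs)) k <=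
  \sum_(b <- bs) minn (size b) k.
Proof.
elim/last_ind: bs => [|bs b IH]; first by rewrite big_nil big1 // => v _; rewrite min0n.
rewrite all_rcons flatten_rcons -cats1 big_cat big_seq1 /= all_cat.
case/andP=> sb sbs lat /andP[rW rb]; set W := flatten bs in lat rW IH *.
have split_min v : minn (count_mem v (W ++ b)) k = minn (count_mem v W) k +
    (minn (count_mem v W + count_mem v b) k - minn (count_mem v W) k).
  by rewrite count_cat; lia.
under eq_bigr => v _ do rewrite split_min.
rewrite big_split /= leq_add ?(IH sbs (lattice_catl lat) rW) // leq_min.
rewrite sum_min_count_block_leq // andbT -(sum_count_mem_range rb).
by apply: leq_sum => v _; move: (count_mem v W) (count_mem v b) => x y; lia.
Qed.

Lemma lattice_first_block_head (bs : seq (seq nat)) W v :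
  all (sorted geq) bs -> lattice_word (W ++ flatten bs) ->
  all (fun x => 0 < x) (W ++ flatten bs) ->
  v \notin W -> v \in flatten bs -> exists2 b, b \in bs & head 0 b = v.
Proof.
elim: bs W => [|b bs IH] W //= /andP[sb sbs] lat pos vW.
rewrite mem_cat; case vb: (v \in b) => /= vbs; last first.
  have [b' b'in hb'] := IH (W ++ b) sbs ltac:(by rewrite -catA)
     ltac:(by rewrite -catA) ltac:(by rewrite mem_cat (negbTE vW) vb) vbs.
  by exists b' => //; rewrite inE b'in orbT.
case: b vb sb lat pos => [|h b'] //= vb sb lat pos.
case: (eqVneq h v) => [<-|hv]; first by exists (h :: b'); rewrite ?mem_head.
move: vb; rewrite inE eq_sym (negbTE hv) /= => vb'.
have vh : v <= h by have := allP (order_path_min geq_transitive sb) v vb'.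
have vpos : 0 < v by apply: (allP pos); rewrite mem_cat /= inE mem_cat vb' !orbT.
(* [v] lies behind the larger head [h] of its block, and [h] needs [h.-1], hence [v],
   to occur in [W] already. *)
move: lat; rewrite -cat1s catA => /lattice_catl lat.
suff : v \in W by rewrite (negbTE vW).
apply: lattice_mem_down (lattice_catl lat) (lattice_pred_mem lat _) _;
  by move: hv; rewrite neq_ltn; lia.
Qed.

(** * Rows, columns and reading words of a skew shape *)

Lemma sum_iota_window (m L X : nat) (P : nat -> bool) : m <= L -> L <= X ->
  \sum_(j <- iota 0 X) ((m <= j) && (j < L) && P j) = \sum_(j <- iota m (L - m)) P j.
Proof.
move=> mL LX; rewrite (_ : X = m + (L - m) + (X - L)); last by lia.
rewrite !iotaD !big_cat /= add0n big1_seq => [|j /andP[_]]; last first.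
  by rewrite mem_iota add0n => /andP[_ jm]; rewrite leqNgt jm.
rewrite [X in _ + _ + X]big1_seq => [|j /andP[_]]; last first.
  by rewrite mem_iota => /andP[jL _]; rewrite (_ : (j < L) = false) ?andbF //; lia.
rewrite add0n addn0; apply: eq_big_seq => j; rewrite mem_iota => /andP[-> ?].
by rewrite (_ : j < L); lia.
Qed.

Section SkewShape.
Variables la mu : seq nat.

Lemma in_skew_size i j : in_skew la mu i j -> i < size la.
Proof. by case/andP=> _; case: (ltnP i (size la)) => // h; rewrite nth_default. Qed.

Lemma sum_in_skew_row i X (P : nat -> bool) :
  nth 0 mu i <= nth 0 la i -> nth 0 la i <= X ->
  \sum_(j <- iota 0 X) (in_skew la mu i j && P j) =
  \sum_(j <- iota (nth 0 mu i) (row_len la mu i)) P j.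
Proof. exact: sum_iota_window. Qed.

Lemma sum_in_skew_row_len i X : nth 0 mu i <= nth 0 la i -> nth 0 la i <= X ->
  \sum_(j <- iota 0 X) in_skew la mu i j = row_len la mu i.
Proof.
move=> h1 h2; have := sum_in_skew_row (fun _ => true) h1 h2.
under eq_bigr => j _ do rewrite andbT.
by move=> ->; rewrite sum1_size size_iota.
Qed.

Definition cells := \sum_(i <- iota 0 (size la)) row_len la mu i.

Definition row_word (T : nat -> nat -> nat) i :=
  [seq T i j | j <- iota (nth 0 mu i) (row_len la mu i)].

Lemma read_wordE T :
  read_word la mu T = flatten [seq rev (row_word T i) | i <- iota 0 (size la)].
Proof. by []. Qed.

Lemma size_read_word T : size (read_word la mu T) = cells.
Proof.
rewrite read_wordE size_flatten /shape -map_comp sumnE big_map.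
by apply: eq_bigr => i _ /=; rewrite size_rev size_map size_iota.
Qed.

Lemma mem_read_word T i j : in_skew la mu i j -> T i j \in read_word la mu T.
Proof.
move=> h; rewrite read_wordE; apply/flattenP; exists (rev (row_word T i)).
  by apply/mapP; exists i; rewrite // mem_iota /= (in_skew_size h).
rewrite mem_rev; apply/mapP; exists j; rewrite // mem_iota.
by move: h; rewrite /in_skew /row_len; lia.
Qed.

Lemma row_words_sorted T :
  (forall i j, in_skew la mu i j -> in_skew la mu i j.+1 -> T i j <= T i j.+1) ->
  all (sorted geq) [seq rev (row_word T i) | i <- iota 0 (size la)].
Proof.
move=> H; apply/allP => b /mapP[i _ ->].
rewrite rev_sorted; apply/(sortedP 0) => q; rewrite size_map size_iota => hq.
rewrite !(nth_map 0) ?size_iota ?nth_iota //=; try lia.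
by rewrite addnS; apply: H; rewrite /in_skew; move: hq; rewrite /row_len; lia.
Qed.

Hypothesis mu_sub_la : forall i, nth 0 mu i <= nth 0 la i.

Lemma sumn_wvec : sumn (wvec la mu) = cells.
Proof.
rewrite /wvec sumnE (perm_big _ (permEl (perm_sort _ _))) big_filter big_mkcond.
rewrite big_map /= (eq_bigr (fun j => col_len la mu j)); last first.
  by move=> j _; case: ifP => //; case: (col_len _ _ _).
under eq_bigr => j _ do rewrite /col_len count_sum.
rewrite exchange_big /=; apply: eq_bigr => i _.
exact: sum_in_skew_row_len (nth_leq_maxl _ _).
Qed.

Lemma count_read_word T v : count_mem v (read_word la mu T) =
  \sum_(i <- iota 0 (size la)) \sum_(j <- iota 0 (maxl la))
     (in_skew la mu i j && (T i j == v)).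
Proof.
rewrite read_wordE count_flatten sumnE !big_map; apply: eq_bigr => i _.
rewrite count_rev count_map count_sum (sum_in_skew_row (fun j => T i j == v)) //.
exact: nth_leq_maxl.
Qed.

End SkewShape.

Lemma sumn_take_wvec_leq la mu k B :
  (forall J, uniq J -> {subset J <= iota 0 (maxl la)} -> size J <= k ->
     \sum_(j <- J) col_len la mu j <= B) ->
  sumn (take k (wvec la mu)) <= B.
Proof.
move=> H; set cols := iota 0 (maxl la).
have pt : perm_eq (wvec la mu)
    (map (col_len la mu) (filter (fun j => 0 < col_len la mu j) cols)).
  by rewrite perm_sort filter_map.
have [J [uJ sJ szJ ->]] := sumn_take_perm_map k (filter_uniq _ (iota_uniq 0 _)) pt.
by apply: H => // z /sJ; rewrite mem_filter => /andP[].
Qed.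

Lemma sumn_take_nvec la mu k :
  sumn (take k (nvec la mu)) = \sum_(i <- iota 0 (size la)) minn (row_len la mu i) k.
Proof.
rewrite /nvec sumn_take_conj (perm_big _ (permEl (perm_sort _ _))).
rewrite big_filter big_mkcond big_map; apply: eq_bigr => i _.
by case: ifP => // /negbT; rewrite -leqNgt leqn0 => /eqP ->; rewrite min0n.
Qed.

(* A column carries each label at most once, so [k] columns contain at most
   [minn (number of boxes labelled v) k] boxes labelled [v]. *)
Lemma sum_cols_leq_labels (nI nJ k : nat) (inS : nat -> nat -> bool)
    (lab : nat -> nat -> nat) (L J : seq nat) :
  uniq L -> uniq J -> {subset J <= iota 0 nJ} -> size J <= k ->
  (forall i i' j, i < nI -> i' < nI -> inS i j -> inS i' j ->
     lab i j = lab i' j -> i = i') ->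
  (forall i j, i < nI -> inS i j -> lab i j \in L) ->
  \sum_(j <- J) count (inS^~ j) (iota 0 nI) <=
  \sum_(v <- L) minn (\sum_(i <- iota 0 nI) \sum_(j <- iota 0 nJ)
                           (inS i j && (lab i j == v))) k.
Proof.
move=> uL uJ sJ szJ inj labL.
have by_label j : count (inS^~ j) (iota 0 nI) =
    \sum_(v <- L) \sum_(i <- iota 0 nI) (inS i j && (lab i j == v)).
  rewrite count_sum exchange_big /=.
  apply: eq_big_seq => i; rewrite mem_iota => /andP[_ hi].
  by case h: (inS i j) => /=; [rewrite sum_eqb_uniq ?labL | rewrite big1].
under eq_bigr => j _ do rewrite by_label.
rewrite exchange_big /=; apply: leq_sum => v _; rewrite leq_min; apply/andP; split.
  by rewrite [X in _ <= X]exchange_big /= leq_sum_sub_uniq ?iota_uniq.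
apply: leq_trans szJ; rewrite -sum1_size; apply: leq_sum => j _.
rewrite -count_sum; apply: count_injective_leq1; first exact: iota_uniq.
move=> x y; rewrite !mem_iota => /andP[_ hx] /andP[_ hy].
move=> /andP[h1 /eqP e1] /andP[h2 /eqP e2].
by apply: (inj x y j) => //; rewrite e1 e2.
Qed.

Lemma sumn_take_wvec_rows la mu k : (forall i, nth 0 mu i <= nth 0 la i) ->
  sumn (take k (wvec la mu)) <=
  \sum_(i <- iota 0 (size la)) minn (row_len la mu i) k.
Proof.
move=> sub; apply: sumn_take_wvec_leq => J uJ sJ szJ.
have row_label i j : i < size la -> in_skew la mu i j -> i \in iota 0 (size la).
  by rewrite mem_iota.
apply: leq_trans (sum_cols_leq_labels (lab := fun i _ => i) (iota_uniq _ _)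
                    uJ sJ szJ _ row_label) _; first by move=> i i' j.
rewrite big_seq [X in _ <= X]big_seq; apply: leq_sum => i.
rewrite mem_iota => /andP[_ hi]; rewrite (bigD1_seq i) ?mem_iota ?iota_uniq //=.
rewrite [X in minn (_ + X) _]big1 => [|i' /negbTE ne]; last first.
  by rewrite big1 // => j _; rewrite ne andbF.
rewrite addn0; under eq_bigr => j _ do rewrite eqxx andbT.
by rewrite sum_in_skew_row_len // nth_leq_maxl.
Qed.

Lemma in_skew_col_between la mu i k i' j : skew_shape la mu ->
  i <= k <= i' -> in_skew la mu i j -> in_skew la mu i' j -> in_skew la mu k j.
Proof.
move=> [/andP[sla _] [/andP[smu _] _]] /andP[h1 h2] /andP[a1 a2] /andP[b1 b2].
have := nth_sorted_geq smu h1; have := nth_sorted_geq sla h2; rewrite /in_skew; lia.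
Qed.

Lemma col_strict_ltn la mu (T : nat -> nat -> nat) : skew_shape la mu ->
  (forall i j, in_skew la mu i j -> in_skew la mu i.+1 j -> T i j < T i.+1 j) ->
  forall i i' j, i < i' -> in_skew la mu i j -> in_skew la mu i' j -> T i j < T i' j.
Proof.
move=> sk H i i' j; elim: i' => // i' IH lti h1 h2.
have hm : in_skew la mu i' j by apply: (in_skew_col_between sk _ h1 h2); lia.
rewrite leq_eqVlt in lti; case/predU1P: lti => [[->]|lti]; first exact: H.
exact: ltn_trans (IH lti h1 hm) (H _ _ hm h2).
Qed.

Lemma col_strict_inj la mu (T : nat -> nat -> nat) : skew_shape la mu ->
  (forall i j, in_skew la mu i j -> in_skew la mu i.+1 j -> T i j < T i.+1 j) ->
  forall i i' j, in_skew la mu i j -> in_skew la mu i' j -> T i j = T i' j -> i = i'.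
Proof.
move=> sk H i i' j h1 h2 e.
case: (ltngtP i i') => // lt; [have := col_strict_ltn sk H lt h1 h2 |
  have := col_strict_ltn sk H lt h2 h1]; by rewrite e ltnn.
Qed.

Lemma sum_content (nu word : seq nat) (F : nat -> nat) :
  (forall k, count_mem k.+1 word = nth 0 nu k) ->
  \sum_(x <- nu) F x = \sum_(1 <= v < (size nu).+1) F (count_mem v word).
Proof. by move=> H; rewrite (big_nth 0) big_add1; apply: eq_bigr => k _; rewrite H. Qed.

Lemma in_supp_in_interval la mu rho : skew_shape la mu -> in_supp la mu rho ->
  in_interval la mu rho.
Proof.
move=> sk [nu [pnu [[T [Hrow [Hcol [Hall [Hcnt Hlat]]]]] ->]]].
have sub := sk.2.2; set word := read_word la mu T in Hall Hcnt Hlat.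
have word_range i j : i < size la -> in_skew la mu i j -> T i j \in iota 1 (size nu).
  by move=> _ h; have := allP Hall _ (mem_read_word T h); rewrite mem_iota; lia.
split; first exact: conj_is_part.
split.
  rewrite sumn_conj sumn_wvec // -(size_read_word la mu T) sumnE (sum_content id Hcnt).
  exact: sum_count_mem_range.
split=> k; rewrite sumn_take_conj (sum_content (minn^~ k) Hcnt).
- apply: sumn_take_wvec_leq => J uJ sJ szJ.
  apply: leq_trans (sum_cols_leq_labels (nI := size la) (lab := T) (iota_uniq _ _)
                      uJ sJ szJ _ word_range) _.
    by move=> i i' j _ _; exact: (col_strict_inj sk Hcol).
  by rewrite /index_iota subn1; apply: leq_sum => v _; rewrite count_read_word.
- rewrite sumn_take_nvec.
  apply: leq_trans (lattice_blocks_bound k (row_words_sorted Hrow) Hlat Hall) _.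
  by rewrite big_map; apply: leq_sum => i _; rewrite size_rev size_map size_iota.
Qed.

(** * Removing the rightmost box of every row *)

Section RemoveRightmostBoxes.
Variables la mu : seq nat.
Local Notation la1 := (remV1 la mu).

Lemma size_remV1 : size la1 = size la.
Proof. by rewrite size_map size_iota. Qed.

Lemma nth_remV1 i : nth 0 la1 i =
  if nth 0 mu i < nth 0 la i then (nth 0 la i).-1 else nth 0 la i.
Proof.
case: (ltnP i (size la)) => h.
  by rewrite /remV1 (nth_map 0) ?size_iota // nth_iota.
by rewrite (@nth_default _ 0 la1) ?size_remV1 // (@nth_default _ 0 la) //; case: ifP.
Qed.

Lemma in_skew_remV1 i j : in_skew la1 mu i j -> in_skew la mu i j.
Proof. by rewrite /in_skew nth_remV1; case: ifP => //; lia. Qed.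

Lemma maxl_remV1 : maxl la1 <= maxl la.
Proof.
by apply: maxl_leq => x /mapP[i _ ->]; have := nth_leq_maxl la i; case: ifP; lia.
Qed.

Lemma row_len_remV1 i :
  row_len la1 mu i + (nth 0 mu i < nth 0 la i) = row_len la mu i.
Proof. by rewrite /row_len nth_remV1; case: ifP => /= h; lia. Qed.

Lemma nrows_sum : nrows la mu = \sum_(i <- iota 0 (size la)) (nth 0 mu i < nth 0 la i).
Proof. exact: count_sum. Qed.

Lemma cells_remV1 : cells la mu = cells la1 mu + nrows la mu.
Proof.
rewrite /cells nrows_sum size_remV1 -big_split /=.
by apply: eq_bigr => i _; rewrite row_len_remV1.
Qed.

Hypothesis mu_sub_la : forall i, nth 0 mu i <= nth 0 la i.

Lemma mu_sub_remV1 i : nth 0 mu i <= nth 0 la1 i.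
Proof. by rewrite nth_remV1; case: ifP => //; have := mu_sub_la i; lia. Qed.

Lemma sum_in_skew_remV1 i X (P : nat -> bool) : nth 0 la i <= X ->
  \sum_(j <- iota 0 X) (in_skew la mu i j && P j) =
  \sum_(j <- iota 0 X) (in_skew la1 mu i j && P j) +
  ((nth 0 mu i < nth 0 la i) && P (nth 0 la i).-1).
Proof.
move=> hX; have h1 := mu_sub_la i; have h1' := mu_sub_remV1 i.
have h2' : nth 0 la1 i <= X by rewrite nth_remV1; case: ifP; lia.
rewrite (sum_in_skew_row P h1 hX) (sum_in_skew_row P h1' h2') /row_len nth_remV1.
case: ifP => h /=; last by rewrite addn0.
rewrite (_ : nth 0 la i - nth 0 mu i = ((nth 0 la i).-1 - nth 0 mu i) + 1); last by lia.
rewrite iotaD big_cat /= big_cons big_nil addn0.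
by rewrite (_ : nth 0 mu i + _ = (nth 0 la i).-1) //; lia.
Qed.

Lemma sumn_wvec_remV1 : nrows la mu + sumn (wvec la1 mu) = sumn (wvec la mu).
Proof. by rewrite !sumn_wvec // ?cells_remV1 1?addnC //; apply: mu_sub_remV1. Qed.

End RemoveRightmostBoxes.

Lemma dominated_nrows_remV1_nvec la mu : (forall i, nth 0 mu i <= nth 0 la i) ->
  dominated (nrows la mu :: wvec (remV1 la mu) mu) (nvec la mu).
Proof.
move=> sub [|k] //=; rewrite sumn_take_nvec.
apply: leq_trans (leq_add (leqnn _) (sumn_take_wvec_rows k (mu_sub_remV1 sub))) _.
rewrite size_remV1 nrows_sum -big_split /=; apply: leq_sum => i _.
by rewrite -(row_len_remV1 la mu i); case: (nth 0 mu i < nth 0 la i); lia.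
Qed.

Lemma head_rev_row_word la mu T i v : 0 < v -> head 0 (rev (row_word la mu T i)) = v ->
  nth 0 mu i < nth 0 la i /\ T i (nth 0 la i).-1 = v.
Proof.
rewrite /row_word /row_len; case e: (nth 0 la i - nth 0 mu i) => [|n] hv.
  by move=> /= h; rewrite -h in hv.
rewrite -addn1 iotaD map_cat rev_cat /= (_ : nth 0 mu i + n = (nth 0 la i).-1).
  by move=> ->; split; lia.
lia.
Qed.

Lemma LR_value_rightmost la mu nu T v : is_part nu -> LR_tableau la mu nu T ->
  0 < v <= size nu ->
  exists2 i, i \in iota 0 (size la) & nth 0 mu i < nth 0 la i /\ T i (nth 0 la i).-1 = v.
Proof.
move=> /andP[_ nupos] [Hrow [_ [Hall [Hcnt Hlat]]]] /andP[v0 vnu].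
have vword : v \in read_word la mu T.
  rewrite -count_mem_gt0 -(prednK v0) Hcnt; apply: (allP nupos).
  by apply: mem_nth; rewrite prednK.
have pos : all (fun x => 0 < x) (read_word la mu T).
  by apply/allP => x /(allP Hall) /andP[].
have [b /mapP[i iin ->] hb] :=
  lattice_first_block_head (W := [::]) (row_words_sorted Hrow) Hlat pos isT vword.
by exists i => //; apply: head_rev_row_word hb.
Qed.

Lemma count_remV1_ltn la mu nu T v : (forall i, nth 0 mu i <= nth 0 la i) ->
  is_part nu -> LR_tableau la mu nu T -> 0 < v <= size nu ->
  \sum_(i <- iota 0 (size la)) \sum_(j <- iota 0 (maxl la))
     (in_skew (remV1 la mu) mu i j && (T i j == v)) < count_mem v (read_word la mu T).
Proof.
move=> sub pnu LR hv; rewrite count_read_word //.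
under [X in _ < X]eq_bigr => i _ do rewrite (sum_in_skew_remV1 sub _ (nth_leq_maxl la i)).
rewrite big_split /= -[X in X < _]addn0 ltn_add2l.
have [i iin [ri Ti]] := LR_value_rightmost pnu LR hv.
by rewrite (bigD1_seq i) ?iota_uniq //= ri Ti eqxx.
Qed.

Lemma in_supp_nrows_remV1 la mu rho k : skew_shape la mu -> in_supp la mu rho ->
  nth 0 rho 0 = nrows la mu ->
  nrows la mu + sumn (take k (wvec (remV1 la mu) mu)) <= sumn (take k.+1 rho).
Proof.
move=> sk [nu [pnu [[T LR] ->]]]; have sub := sk.2.2.
have nupos : all (fun x => 0 < x) nu by case/andP: pnu.
rewrite nth0_conj // => <-; rewrite sumn_take_conj.
have -> : \sum_(x <- nu) minn x k.+1 = size nu + \sum_(x <- nu) minn x.-1 k.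
  rewrite -sum1_size -big_split /=; apply: eq_big_seq => x /(allP nupos); lia.
case: LR (LR) => [Hrow [Hcol [Hall [Hcnt Hlat]]]] LR.
rewrite leq_add2l (sum_content (fun x => minn x.-1 k) Hcnt).
apply: sumn_take_wvec_leq => J uJ sJ szJ.
have sJ' : {subset J <= iota 0 (maxl la)}.
  by move=> z /sJ; rewrite !mem_iota /=; have := maxl_remV1 la mu; lia.
have inj i i' j : i < size (remV1 la mu) -> i' < size (remV1 la mu) ->
    in_skew (remV1 la mu) mu i j -> in_skew (remV1 la mu) mu i' j ->
    T i j = T i' j -> i = i'.
  move=> _ _ /in_skew_remV1 h1 /in_skew_remV1 h2.
  exact: col_strict_inj sk Hcol _ _ _ h1 h2.
have lab i j : i < size (remV1 la mu) -> in_skew (remV1 la mu) mu i j ->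
    T i j \in iota 1 (size nu).
  by move=> _ /in_skew_remV1 /(mem_read_word T) /(allP Hall); rewrite mem_iota; lia.
apply: leq_trans (sum_cols_leq_labels (iota_uniq _ _) uJ sJ' szJ inj lab) _.
rewrite /index_iota subn1 /= big_seq [X in _ <= X]big_seq.
apply: leq_sum => v; rewrite mem_iota => hv.
have := count_remV1_ltn sub pnu LR (v := v) ltac:(lia); rewrite size_remV1.
by move: (\sum_(i <- _) _) (count_mem v _) => x y; lia.
Qed.

(** * Moving a box between two parts of a partition *)

Lemma exists_move_box_positions (s : seq nat) I J : sorted geq s -> I < J < size s ->
  nth 0 s J + 2 <= nth 0 s I ->
  exists a b, [/\ I <= a < b, b <= J, nth 0 s a.+1 < nth 0 s a,
                  nth 0 s b < nth 0 s b.-1 & nth 0 s b + 2 <= nth 0 s a].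
Proof.
move=> ss /andP[IJ Js] gap; have mono := nth_sorted_geq ss.
(* [fa.-1] is the last position holding [nth 0 s I], [b] the first holding [nth 0 s J]. *)
set fa := find (fun x => x < nth 0 s I) s; set b := find (fun x => x <= nth 0 s J) s.
have sJ : nth 0 s J \in s by rewrite mem_nth.
have hasa : has (fun x => x < nth 0 s I) s by apply/hasP; exists (nth 0 s J) => //=; lia.
have hasb : has (fun x => x <= nth 0 s J) s by apply/hasP; exists (nth 0 s J).
have sfa : nth 0 s fa < nth 0 s I := nth_find 0 hasa.
have sb : nth 0 s b <= nth 0 s J := nth_find 0 hasb.
have Ifa : I < fa by rewrite ltnNge; apply/negP => /mono; lia.
have bJ : b <= J by rewrite leqNgt; apply/negP => /(before_find 0); rewrite leqnn.
have sa : nth 0 s fa.-1 = nth 0 s I.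
  have := @before_find _ 0 (fun x => x < nth 0 s I) s fa.-1 ltac:(lia).
  move/negbT; rewrite -leqNgt; have := mono I fa.-1 ltac:(lia); lia.
have b0 : 0 < b by case: (posnP b) sb => // ->; have := mono 0 I; lia.
have sb1 : nth 0 s J < nth 0 s b.-1.
  have := @before_find _ 0 (fun x => x <= nth 0 s J) s b.-1 ltac:(lia).
  by move/negbT; rewrite -ltnNge.
have ab : fa.-1 < b by rewrite ltnNge; apply/negP => /mono; have := mono _ _ bJ; lia.
exists fa.-1, b; rewrite prednK; last lia.
by split; try lia; have := mono _ _ bJ; lia.
Qed.

(* The truncated subtraction is exact once [0 < nth 0 s a], see [nth_move_box_eq]. *)
Definition move_box (s : seq nat) a b :=
  mkseq (fun p => nth 0 s p + (p == b) - (p == a)) (size s).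

Section MoveBox.
Variables (s : seq nat) (a b : nat).
Hypotheses (lt_ab : a < b) (lt_b_size : b < size s) (sa_gt0 : 0 < nth 0 s a).

Lemma nth_move_box_eq p :
  nth 0 (move_box s a b) p + (p == a) = nth 0 s p + (p == b).
Proof.
case: (ltnP p (size s)) => hp; last first.
  by rewrite !nth_default ?size_mkseq //; do 2![case: eqP => //; lia].
by rewrite nth_mkseq //; case: (eqVneq p a) => [->|]; [rewrite ltn_eqF |]; lia.
Qed.

Lemma sumn_take_move_box m :
  sumn (take m (move_box s a b)) + (a < m) = sumn (take m s) + (b < m).
Proof.
rewrite !sumn_take_nth size_mkseq; set K := minn m (size s).
have [aK bK] : (a < m) = (a < K) /\ (b < m) = (b < K) by split; lia.
rewrite aK bK -(sum_nat_eqb a K) -(sum_nat_eqb b K) -!big_split /=.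
by apply: eq_bigr => p _; rewrite nth_move_box_eq.
Qed.

Lemma sumn_move_box : sumn (move_box s a b) = sumn s.
Proof.
have := sumn_take_move_box (size s).
by rewrite !take_oversize ?size_mkseq // (ltn_trans lt_ab lt_b_size) lt_b_size => /addIn.
Qed.

Lemma move_box_dominated t : dominated s t -> dominated (move_box s a b) t.
Proof.
move=> st m; apply: leq_trans (st m); have := sumn_take_move_box m.
by case: (ltnP b m) => bm; [rewrite (ltn_trans lt_ab bm) => /addIn ->|lia].
Qed.

Lemma dominated_move_box w : dominated w s ->
  (forall m, a < m <= b -> sumn (take m w) < sumn (take m s)) ->
  dominated w (move_box s a b).
Proof.
move=> ws slack m; have := sumn_take_move_box m; have := ws m.
case: (ltnP a m) => am; last by rewrite (_ : b < m = false); lia.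
case: (ltnP b m) => bm; first lia.
by have := slack m ltac:(lia); lia.
Qed.

Lemma move_box_is_part : is_part s -> nth 0 s a.+1 < nth 0 s a ->
  nth 0 s b < nth 0 s b.-1 -> nth 0 s b + 2 <= nth 0 s a -> is_part (move_box s a b).
Proof.
move=> /andP[ss spos] desc_a desc_b gap; have E := nth_move_box_eq.
apply/andP; split.
- apply/(sortedP 0) => q; rewrite size_mkseq => hq.
  have da : q = a -> nth 0 s q.+1 < nth 0 s q by move->.
  have db : q.+1 = b -> nth 0 s q.+1 < nth 0 s q by move=> qb; move: desc_b; rewrite -qb.
  have dg : q = a -> q.+1 = b -> nth 0 s q.+1 + 2 <= nth 0 s q.
    by move=> -> ab1; rewrite ab1.
  move: da db dg (E q) (E q.+1) (nth_sorted_geq ss (leqnSn q)).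
  by case: (q =P a); case: (q =P b); case: (q.+1 =P a); case: (q.+1 =P b); lia.
- apply/(all_nthP 0) => p; rewrite size_mkseq => hp.
  move: (E p) (all_nthP 0 spos p hp).
  by case: (p =P a) => [->|_]; case: (_ =P b) => _; lia.
Qed.

End MoveBox.

Lemma move_box_not_in_supp la mu a b : skew_shape la mu ->
  let sigma := nrows la mu :: wvec (remV1 la mu) mu in
  0 < a < b -> b < size sigma -> 0 < nth 0 sigma a ->
  ~ in_supp la mu (move_box sigma a b).
Proof.
move=> sk sigma /andP[a0 ab] bs sa /in_supp_nrows_remV1 H.
have := nth_move_box_eq ab bs sa 0; rewrite !(eq_sym 0) !gtn_eqF ?(ltn_trans a0 ab) //.
rewrite !addn0 => /(H a sk); have := sumn_take_move_box ab bs sa a.+1.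
rewrite ltnSn ltnS (ltn_geF ab); move: (move_box sigma a b) => rho /=.
by move: (sumn (take a.+1 rho)) (sumn (take a _)); lia.
Qed.

Lemma move_box_in_interval la mu (sigma : seq nat) a b :
  is_part sigma -> sumn sigma = sumn (wvec la mu) ->
  dominated (wvec la mu) sigma -> dominated sigma (nvec la mu) ->
  a < b < size sigma -> nth 0 sigma a.+1 < nth 0 sigma a ->
  nth 0 sigma b < nth 0 sigma b.-1 -> nth 0 sigma b + 2 <= nth 0 sigma a ->
  (forall m, a < m <= b -> sumn (take m (wvec la mu)) < sumn (take m sigma)) ->
  in_interval la mu (move_box sigma a b).
Proof.
move=> ps ssum wsig sign /andP[ab bs] da db gap slack.
have sa : 0 < nth 0 sigma a by lia.
split; first exact: move_box_is_part.
split; first by rewrite sumn_move_box.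
by split; [apply: dominated_move_box | apply: move_box_dominated].
Qed.

Theorem mainTheorem9 (la mu : seq nat) (l i j : nat) :
  skew_shape la mu -> connected_skew la mu ->
  let w := wvec la mu in
  let r := size w in
  let n1 := nrows la mu in
  let w1 := wvec (remV1 la mu) mu in
  let sigma := sort geq (n1 :: w1) in
  3 <= l <= r ->
  (* sigma = (n1, wb_2, ..., wb_l, w_{l+1}, ..., w_r) *)
  size sigma = r ->
  nth1 sigma 1 = n1 ->
  (forall k, 2 <= k <= l -> nth1 sigma k <= nth1 w k) ->
  (forall k, l < k <= r -> nth1 sigma k = nth1 w k) ->
  0 < nth1 sigma l < nth1 w l ->
  2 <= i -> i < j -> j <= l ->
  nth1 sigma j + 2 <= nth1 sigma i ->
  nth1 sigma j < nth1 w j ->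
  (forall rho, in_supp la mu rho -> in_interval la mu rho) /\
  (exists rho, in_interval la mu rho /\ ~ in_supp la mu rho).
Proof.
move=> sk _ w r n1 w1 sigma /andP[l3 lr] size_sigma head_sigma sigma_le sigma_eq
  /andP[sigma_l_gt0 sigma_l_lt] i2 ij jl gap _.
split=> [rho|]; first exact: in_supp_in_interval.
rewrite /nth1 /= in head_sigma sigma_le sigma_eq sigma_l_gt0 sigma_l_lt gap.
have sigmaE : sigma = n1 :: w1.
  by apply: sort_geq_cons => //; exact: sort_sorted geq_total _.
have sorted_sigma : sorted geq sigma := sort_sorted geq_total _.
have part_sigma : is_part sigma.
  rewrite /is_part sorted_sigma sigmaE /= all_sort filter_all andbT.
  by have := nth_sorted_geq sorted_sigma (leq0n l.-1); rewrite head_sigma; lia.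
have sub := sk.2.2.
have sum_sigma : sumn sigma = sumn w by rewrite sigmaE /= sumn_wvec_remV1.
have sigma_leq_w p : 0 < p -> nth 0 sigma p <= nth 0 w p.
  move=> p0; case: (ltnP p r) => pr; last by rewrite !nth_default ?size_sigma.
  case: (ltnP p l) => pl; first by apply: (sigma_le p.+1); lia.
  by rewrite [nth 0 sigma p](sigma_eq p.+1) //; lia.
have [a [b [/andP[ia ab] bj desc_a desc_b gap_ab]]] :=
  exists_move_box_positions sorted_sigma (I := i.-1) (J := j.-1) ltac:(lia) gap.
exists (move_box sigma a b); split; last first.
  by rewrite sigmaE; apply: move_box_not_in_supp; rewrite -?sigmaE //; lia.
apply: move_box_in_interval => //; try lia.
- case=> [|m]; first by rewrite !take0.
  by apply: sumn_take_leq_tail => // p mp; apply: sigma_leq_w; lia.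
- by rewrite sigmaE; apply: dominated_nrows_remV1_nvec.
- move=> m /andP[am mb]; apply: sumn_take_ltn_tail (l.-1) _ _ _ _ => //; try lia.
  by move=> p mp; apply: sigma_leq_w; lia.
Qed.
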